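(* Let $\Phi=\forall u_1\ldots\forall u_n\exists e_1(D_1)\ldots\exists e_m(D_m).\varphi$ be a DQBF. If Algorithm 1 (as described in the context), run on $\Phi$, returns FALSE, then $\Phi$ is false; this holds for every admissible choice made during the run.
   Context: For a set $V$ of variables, $[V]$ is the set of assignments $V\to\{\textsc{true},\textsc{false}\}$; assignments are identified with terms of the literals they make true, $\neg\sigma$ is the clause of the negations of these literals, and $\sigma|_W$ denotes restriction. A DQBF is $\Phi=\forall u_1\ldots\forall u_n\exists e_1(D_1)\ldots\exists e_m(D_m).\varphi$ with pairwise distinct variables, $U=\{u_i\}$, $E=\{e_j\}$, dependency sets $D(e_j)=D_j\subseteq U$, $\varphi$ a CNF over $U\cup E$; a model is a family $(f_e)_{e\in E}$, $f_e:[D(e)]\to\{\textsc{true},\textsc{false}\}$, such that for all $\sigma\in[U]$ the assignment $\sigma$ together with $e\mapsto f_e(\sigma|_{D(e)})$ satisfies $\varphi$; $\Phi$ is true iff it has a model, false otherwise. A definition of a variable $x$ by a set $X$ in a formula $\chi$ is a formula $\psi$ with $\mathit{var}(\psi)\subseteq X$ such that every satisfying assignment $\lambda$ of $\chi$ has $\lambda(x)=\psi[\lambda]$. Arbiter variables $e^\sigma$ ($e\in E$, $\sigma\in[D(e)]$) are fresh variables. Algorithm 1. Phase 1: set $A=\emptyset$, $\varphi_A=\emptyset$, $\psi_{\mathit{Def}}=$ empty conjunction. For $i=1,\dots,m$: while $e_i$ has no definition by $A\cup D_i$ in $\varphi\wedge\varphi_A$, choose $\xi\in[D_i\cup A]$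 such that both $\varphi\wedge\varphi_A\wedge\xi\wedge e_i$ and $\varphi\wedge\varphi_A\wedge\xi\wedge\neg e_i$ are satisfiable, let $\sigma=\xi|_{D_i}$, add $e_i^\sigma$ to $A$ and the clauses $(e_i^\sigma\vee\neg\sigma\vee\neg e_i)$, $(\neg e_i^\sigma\vee\neg\sigma\vee e_i)$ to $\varphi_A$. Then choose a definition $\psi^i$ of $e_i$ by $A\cup D_i$ in $\varphi\wedge\varphi_A$ and conjoin $(e_i\leftrightarrow\psi^i)$ to $\psi_{\mathit{Def}}$. Phase 2: let $\tau\in[A]$ set all arbiter variables true, $\mathcal{C}=\emptyset$. Repeat: if $\neg\varphi\wedge\psi_{\mathit{Def}}\wedge\tau$ is unsatisfiable, return TRUE; otherwise choose a satisfying assignment $\sigma$ of it, choose a subset $\rho$ of the literals of $\tau\wedge\sigma|_U$ with $\varphi\wedge\varphi_A\wedge\rho$ unsatisfiable, add the clause $\neg(\rho|_A)$ to $\mathcal{C}$; if $\mathcal{C}$ is satisfiable, let $\tau\in[A]$ satisfy $\mathcal{C}$ and repeat, else return FALSE. *)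

From mathcomp Require Import all_boot.
Set Implicit Arguments. Unset Strict Implicit. Unset Printing Implicit Defensive.

Definition lit (T : Type) := (T * bool)%type.               (* (x, b): x = b *)
Definition clause (T : Type) := seq (lit T).
Definition cnf (T : Type) := seq (clause T).

Definition lit_true (T : Type) (lam : T -> bool) (l : lit T) := lam l.1 == l.2.
Definition sat_clause (T : Type) (lam : T -> bool) (c : clause T) :=
  has (lit_true lam) c.
Definition sat_cnf (T : Type) (lam : T -> bool) (f : cnf T) :=
  all (sat_clause lam) f.

Inductive form (T : Type) :=
| FVar of T | FTrue | FNot of form T | FAnd of form T & form T | FOr of form T & form T.
Arguments FTrue {T}.

Fixpoint feval (T : Type) (lam : T -> bool) (p : form T) : bool :=
  match p with
  | FVar x => lam x
  | FTrue => true
  | FNot q => ~~ feval lam q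
  | FAnd q r => feval lam q && feval lam r
  | FOr q r => feval lam q || feval lam r
  end.

Fixpoint fvars (T : Type) (p : form T) : seq T :=
  match p with
  | FVar x => [:: x]
  | FTrue => [::]
  | FNot q => fvars q
  | FAnd q r | FOr q r => fvars q ++ fvars r
  end.

Definition is_definition (T : Type) (chi : cnf T) (x : T) (X : pred T) (psi : form T) :=
  all X (fvars psi) /\ forall lam : T -> bool, sat_cnf lam chi -> lam x = feval lam psi.
Definition has_definition (T : Type) (chi : cnf T) (x : T) (X : pred T) :=
  exists psi : form T, is_definition chi x X psi.

Record dqbf (V : finType) := Dqbf {
  dq_U : {set V};
  dq_E : seq V;
  dq_D : V -> {set V};
  dq_phi : cnf V
}.

Definition wf_dqbf (V : finType) (P : dqbf V) :=
  [/\ uniq (dq_E P),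
      [disjoint dq_U P & [pred x | x \in dq_E P]],
      (forall e, e \in dq_E P -> dq_D P e \subset dq_U P) &
      (forall c, c \in dq_phi P -> forall l, l \in c ->
         (l.1 \in dq_U P) || (l.1 \in dq_E P))].

(* A model: for each e in E a function f e of assignments that only depends on
   the values on D(e) (i.e. a function [D(e)] -> bool), such that for every
   universal assignment sigma, sigma extended by e |-> f_e(sigma|_D(e))
   satisfies phi. *)
Definition dqbf_model (V : finType) (P : dqbf V) (f : V -> (V -> bool) -> bool) :=
  (forall e, e \in dq_E P -> forall s s' : V -> bool,
      {in dq_D P e, s =1 s'} -> f e s = f e s') /\
  (forall s : V -> bool,
      sat_cnf (fun x => if x \in dq_E P then f x s else s x) (dq_phi P)).

Definition dqbf_true (V : finType) (P : dqbf V) :=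
  exists f, dqbf_model P f.

(* A partial assignment sigma in [W] is a finite function V -> option bool whose
   domain (where it is Some) is W. Arbiter variable e^sigma is inr (e, sigma). *)
Definition pasg (V : finType) := {ffun V -> option bool}.
Definition xvar (V : finType) := (V + (V * pasg V))%type.

Definition lift_cnf (V : finType) (f : cnf V) : cnf (xvar V) :=
  map (map (fun l : lit V => ((inl l.1 : xvar V), l.2))) f.

Definition neg_pasg (V : finType) (s : pasg V) : clause (xvar V) :=
  pmap (fun v => omap (fun b => ((inl v : xvar V), ~~ b)) (s v)) (enum V).

Definition restr (V : finType) (lam : xvar V -> bool) (W : {set V}) : pasg V :=
  [ffun v => if v \in W then Some (lam (inl v)) else None].

Definition arbiter_clauses (V : finType) (e : V) (s : pasg V) : cnf (xvar V) :=
  [:: ((inr (e, s) : xvar V), true) :: rcons (neg_pasg s) ((inl e : xvar V), false);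
      ((inr (e, s) : xvar V), false) :: rcons (neg_pasg s) ((inl e : xvar V), true)].

Definition DA (V : finType) (P : dqbf V) (e : V) (A : {set xvar V}) : {set xvar V} :=
  [set (inl v : xvar V) | v in dq_D P e] :|: A.

(* chi and xi /\ (e or not e) satisfiable, xi in [X] given by the values of lam0 on X *)
Definition sat_with_term (V : finType) (chi : cnf (xvar V)) (X : {set xvar V})
  (lam0 : xvar V -> bool) (x : xvar V) (b : bool) :=
  exists lam : xvar V -> bool, [/\ sat_cnf lam chi, {in X, lam =1 lam0} & lam x = b].

(* Phase 1, while loop for a fixed e_i : state (A, phi_A) -> final (A, phi_A) *)
Inductive phase1_loop (V : finType) (P : dqbf V) (e : V) :
  {set xvar V} -> cnf (xvar V) -> {set xvar V} -> cnf (xvar V) -> Prop :=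
| P1L_stop A phiA :
    has_definition (lift_cnf (dq_phi P) ++ phiA) (inl e) (mem (DA P e A)) ->
    phase1_loop P e A phiA A phiA
| P1L_step A phiA (xi : xvar V -> bool) A' phiA' :
    ~ has_definition (lift_cnf (dq_phi P) ++ phiA) (inl e) (mem (DA P e A)) ->
    sat_with_term (lift_cnf (dq_phi P) ++ phiA) (DA P e A) xi (inl e) true ->
    sat_with_term (lift_cnf (dq_phi P) ++ phiA) (DA P e A) xi (inl e) false ->
    phase1_loop P e (inr (e, restr xi (dq_D P e)) |: A)
                    (phiA ++ arbiter_clauses e (restr xi (dq_D P e))) A' phiA' ->
    phase1_loop P e A phiA A' phiA'.

(* Phase 1 over the remaining list of existentials; defs collects (e_i, psi^i),
   representing psi_Def = /\_i (e_i <-> psi^i). *)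
Inductive phase1 (V : finType) (P : dqbf V) :
  seq V -> {set xvar V} -> cnf (xvar V) -> seq (V * form (xvar V)) ->
  {set xvar V} -> cnf (xvar V) -> seq (V * form (xvar V)) -> Prop :=
| P1_nil A phiA defs : phase1 P [::] A phiA defs A phiA defs
| P1_cons e es A phiA defs A1 phiA1 psi A2 phiA2 defs2 :
    phase1_loop P e A phiA A1 phiA1 ->
    is_definition (lift_cnf (dq_phi P) ++ phiA1) (inl e) (mem (DA P e A1)) psi ->
    phase1 P es A1 phiA1 (rcons defs (e, psi)) A2 phiA2 defs2 ->
    phase1 P (e :: es) A phiA defs A2 phiA2 defs2.

(* lam satisfies  not phi /\ psi_Def /\ tau  (tau in [A] given by its values on A) *)
Definition sat_phase2 (V : finType) (P : dqbf V) (A : {set xvar V})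
  (defs : seq (V * form (xvar V))) (tau : xvar V -> bool) (lam : xvar V -> bool) :=
  [/\ ~~ sat_cnf lam (lift_cnf (dq_phi P)),
      all (fun d => lam (inl d.1) == feval lam d.2) defs &
      {in A, lam =1 tau}].

(* rho is a set of literals of the term  tau /\ sigma|_U *)
Definition sub_lits (V : finType) (P : dqbf V) (A : {set xvar V})
  (tau lam : xvar V -> bool) (rho : seq (lit (xvar V))) :=
  forall l, l \in rho ->
    (l.1 \in A /\ l.2 = tau l.1) \/
    (exists u, [/\ u \in dq_U P, l.1 = inl u & l.2 = lam (inl u)]).

Definition neg_restrA (V : finType) (A : {set xvar V}) (rho : seq (lit (xvar V)))
  : clause (xvar V) :=
  [seq (l.1, ~~ l.2) | l <- rho & l.1 \in A].

(* Phase 2: from current (tau, C) the run returns the boolean result. *)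
Inductive phase2 (V : finType) (P : dqbf V) (A : {set xvar V}) (phiA : cnf (xvar V))
  (defs : seq (V * form (xvar V))) : (xvar V -> bool) -> cnf (xvar V) -> bool -> Prop :=
| P2_true tau C :
    ~ (exists lam, sat_phase2 P A defs tau lam) ->
    phase2 P A phiA defs tau C true
| P2_false tau C lam rho :
    sat_phase2 P A defs tau lam ->
    sub_lits P A tau lam rho ->
    ~ (exists mu, sat_cnf mu (lift_cnf (dq_phi P) ++ phiA) /\ all (lit_true mu) rho) ->
    ~ (exists mu, sat_cnf mu (rcons C (neg_restrA A rho))) ->
    phase2 P A phiA defs tau C false
| P2_step tau C lam rho tau' r :
    sat_phase2 P A defs tau lam ->
    sub_lits P A tau lam rho ->
    ~ (exists mu, sat_cnf mu (lift_cnf (dq_phi P) ++ phiA) /\ all (lit_true mu) rho) ->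
    sat_cnf tau' (rcons C (neg_restrA A rho)) ->
    phase2 P A phiA defs tau' (rcons C (neg_restrA A rho)) r ->
    phase2 P A phiA defs tau C r.

Definition alg1_returns (V : finType) (P : dqbf V) (r : bool) :=
  exists A phiA defs,
    phase1 P (dq_E P) set0 [::] [::] A phiA defs /\
    phase2 P A phiA defs (fun _ => true) [::] r.

(** A model [f] of the DQBF fixes a canonical value [f_e(σ)] for every arbiter
    variable [e^σ].  Extending any universal assignment by the model and by these
    arbiter values satisfies [φ ∧ φ_A], because the arbiter clauses only force
    [e^σ = e] under [σ], where the model gives [e] the value [f_e(σ)].  Hence no
    clause learned in phase 2 can be violated by the canonical arbiter values: it
    would exhibit a satisfying assignment of [φ ∧ φ_A ∧ ρ].  The clause set [C]
    therefore stays satisfiable and the algorithm cannot return FALSE. *)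

From mathcomp Require Import all_boot.
Set Implicit Arguments. Unset Strict Implicit. Unset Printing Implicit Defensive.

Section Clauses.
Variable V : finType.
Implicit Types (lam : xvar V -> bool) (a b : cnf (xvar V)).

Lemma sat_cnf_cat lam a b : sat_cnf lam (a ++ b) = sat_cnf lam a && sat_cnf lam b.
Proof. exact: all_cat. Qed.

Lemma sat_cnf_rcons lam a c : sat_cnf lam (rcons a c) = sat_clause lam c && sat_cnf lam a.
Proof. exact: all_rcons. Qed.

Lemma sat_lift_cnf lam (f : cnf V) :
  sat_cnf lam (lift_cnf f) = sat_cnf (fun v => lam (inl v)) f.
Proof.
rewrite /sat_cnf all_map; apply: eq_all => c /=.
by rewrite /sat_clause has_map; apply: eq_has.
Qed.

Lemma lit_true_neg lam (x : xvar V) (b : bool) : lit_true lam (x, ~~ b) = (lam x != b).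
Proof. by rewrite /lit_true /=; case: (lam x); case: b. Qed.

Lemma sat_neg_pasg_restr lam xi (W : {set V}) :
  sat_clause lam (neg_pasg (restr xi W)) = [exists v in W, lam (inl v) != xi (inl v)].
Proof.
apply/hasP/exists_inP => [[l] | [v vW neq]].
  rewrite mem_pmap => /mapP[v _]; rewrite /restr ffunE.
  by case: ifP => // vW [->]; rewrite lit_true_neg => neq; exists v.
exists (inl v, ~~ xi (inl v)); last by rewrite lit_true_neg.
by rewrite mem_pmap; apply/mapP; exists v; rewrite ?mem_enum // /restr ffunE vW.
Qed.

Lemma sat_arbiter_clauses lam e s :
  sat_cnf lam (arbiter_clauses e s) =
  sat_clause lam (neg_pasg s) || (lam (inr (e, s)) == lam (inl e)).
Proof.
rewrite /sat_cnf /sat_clause /= !has_rcons /lit_true /=.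
by case: (lam (inr _)); case: (lam (inl e)); case: has.
Qed.

Lemma sat_neg_restrA lam (A : {set xvar V}) rho :
  sat_clause lam (neg_restrA A rho) = ~~ all (lit_true lam) [seq l <- rho | l.1 \in A].
Proof.
rewrite /sat_clause /neg_restrA has_map -has_predC; apply: eq_has => -[x bx].
by rewrite /= lit_true_neg.
Qed.

End Clauses.

Section Algorithm.
Variable V : finType.
Variable P : dqbf V.

Definition is_arbiter (x : xvar V) : bool := if x is inr _ then true else false.

Definition arbiter_cnf (phiA : cnf (xvar V)) :=
  forall c, c \in phiA ->
    exists e xi, e \in dq_E P /\ c \in arbiter_clauses e (restr xi (dq_D P e)).

Definition phase1_invariant (A : {set xvar V}) (phiA : cnf (xvar V)) :=
  {subset A <= is_arbiter} /\ arbiter_cnf phiA.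

Lemma phase1_loop_invariant e A phiA A' phiA' :
  phase1_loop P e A phiA A' phiA' -> e \in dq_E P ->
  phase1_invariant A phiA -> phase1_invariant A' phiA'.
Proof.
elim=> // {}A {}phiA xi {}A' {}phiA' _ _ _ _ IH eE [arbA arbC].
apply: IH => //; split=> [x | c].
  by rewrite in_setU1 => /orP[/eqP -> | /arbA].
by rewrite mem_cat => /orP[/arbC // | cxi]; exists e, xi.
Qed.

Lemma phase1_invariant_preserved es A phiA defs A2 phiA2 defs2 :
  phase1 P es A phiA defs A2 phiA2 defs2 -> {subset es <= dq_E P} ->
  phase1_invariant A phiA -> phase1_invariant A2 phiA2.
Proof.
elim=> // e {}es {}A {}phiA {}defs A1 phiA1 psi {}A2 {}phiA2 {}defs2.
move=> loop _ _ IH esE inv; apply: IH => [x xes|].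
  by apply: esE; rewrite in_cons xes orbT.
by apply: phase1_loop_invariant loop _ inv; apply: esE; rewrite mem_head.
Qed.

Lemma phase1_run_invariant A phiA defs :
  phase1 P (dq_E P) set0 [::] [::] A phiA defs -> phase1_invariant A phiA.
Proof.
move=> run; apply: phase1_invariant_preserved run _ _ => //.
by split=> x; rewrite ?in_set0.
Qed.

Lemma phase2_returns_true_if_learned_sat A phiA defs (t : xvar V -> bool) tau C r :
  (forall tau0 lam rho, sub_lits P A tau0 lam rho ->
     ~ (exists mu, sat_cnf mu (lift_cnf (dq_phi P) ++ phiA) /\ all (lit_true mu) rho) ->
     sat_clause t (neg_restrA A rho)) ->
  phase2 P A phiA defs tau C r -> sat_cnf t C -> r.
Proof.
move=> learned_sat; elim=> // {}tau {}C lam rho.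
  move=> _ rho_lits rho_unsat C_unsat tC; case: C_unsat; exists t.
  by rewrite sat_cnf_rcons tC (learned_sat tau lam).
move=> tau' {}r _ rho_lits rho_unsat _ _ IH tC; apply: IH.
by rewrite sat_cnf_rcons tC (learned_sat tau lam).
Qed.

Hypothesis wf : wf_dqbf P.
Variable f : V -> (V -> bool) -> bool.
Hypothesis f_model : dqbf_model P f.

(* The [false] padding outside the domain of [s] is harmless: arbiter variables
   only occur as [e^s] with [s] defined exactly on [dq_D P e]. *)
Definition model_arbiters (x : xvar V) : bool :=
  if x is inr (e, s) then f e (fun v => odflt false (s v)) else false.

Definition model_asg (sg : V -> bool) (x : xvar V) : bool :=
  if x is inl v then (if v \in dq_E P then f v sg else sg v) else model_arbiters x.

Lemma universal_notin_E u : u \in dq_U P -> u \notin dq_E P.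
Proof. by case: wf => _ disUE _ _ uU; rewrite (disjointFr disUE uU). Qed.

Lemma model_asg_universal sg u : u \in dq_U P -> model_asg sg (inl u) = sg u.
Proof. by move=> uU; rewrite /= (negbTE (universal_notin_E uU)). Qed.

Lemma model_asg_arbiter_clauses sg e xi : e \in dq_E P ->
  sat_cnf (model_asg sg) (arbiter_clauses e (restr xi (dq_D P e))).
Proof.
move=> eE; rewrite sat_arbiter_clauses sat_neg_pasg_restr.
have DU : {subset dq_D P e <= dq_U P} by case: wf => _ _ DU _; apply/subsetP/DU.
case: exists_inP => [// | agree] /=; rewrite eE; apply/eqP.
case: f_model => f_dep _; apply: f_dep => // v vD.
rewrite /restr ffunE vD /= -(model_asg_universal sg (DU v vD)).
by apply/eqP/negbNE/negP => neq; apply: agree; exists v; rewrite // eq_sym.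
Qed.

Lemma model_asg_sat sg phiA : arbiter_cnf phiA ->
  sat_cnf (model_asg sg) (lift_cnf (dq_phi P) ++ phiA).
Proof.
move=> arbC; rewrite sat_cnf_cat sat_lift_cnf; apply/andP; split.
  by case: f_model => _; apply.
apply/allP => c /arbC[e [xi [eE cxi]]].
by apply: (allP (model_asg_arbiter_clauses sg xi eE)).
Qed.

Lemma model_arbiters_sat_learned A phiA tau lam rho :
  phase1_invariant A phiA -> sub_lits P A tau lam rho ->
  ~ (exists mu, sat_cnf mu (lift_cnf (dq_phi P) ++ phiA) /\ all (lit_true mu) rho) ->
  sat_clause model_arbiters (neg_restrA A rho).
Proof.
move=> [arbA arbC] rho_lits rho_unsat; rewrite sat_neg_restrA; apply/negP => tA.
apply: rho_unsat; exists (model_asg (fun v => lam (inl v))); split.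
  exact: model_asg_sat.
apply/allP => l l_rho; case: (rho_lits l l_rho) => [[lA _] | [u [uU l1 l2]]].
  have := allP tA l; rewrite mem_filter lA l_rho => /(_ isT).
  by case: l {l_rho} lA => -[v | p] b // /arbA.
by rewrite /lit_true l1 l2 model_asg_universal.
Qed.

End Algorithm.

Theorem theorem2 (V : finType) (P : dqbf V) :
  wf_dqbf P -> alg1_returns P false -> ~ dqbf_true P.
Proof.
move=> wf [A [phiA [defs [run1 run2]]]] [f f_model].
have inv := phase1_run_invariant run1.
have learned_sat := model_arbiters_sat_learned wf f_model inv.
by have := phase2_returns_true_if_learned_sat learned_sat run2 isT.
Qed.
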